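(* Let $n\ge1$ and let $k$ be an integer with $1\le k\le \frac n4+1$. Let $f:\mathbb{R}^n\to\mathbb{R}$ be radial, $f(x)=f_1(\|x\|_2)$, where $f_1$ is $2k$ times continuously differentiable on $(0,\infty)$. Then there are real numbers $c_{i,j}$ (depending on $n$ and $k$), indexed by integers $0\le i\le 2k$, $0\le j\le 2k-1$ with $i+j\le 2k$, satisfying $\sum_{i,j}|c_{i,j}|\le 5^k$, such that for all $x\ne0$, with $r=\|x\|_2$, $$((I-\Delta)^kf)(x)=\sum_{\substack{0\le i\le 2k,\ 0\le j\le 2k-1\\ i+j\le 2k}}\frac{c_{i,j}\,n^j f_1^{(i)}(r)}{r^j}.$$
   Context: $\Delta=\sum_{i=1}^n\partial^2/\partial x_i^2$ is the Laplacian and $(I-\Delta)h=h-\Delta h$; $(I-\Delta)^k$ is its $k$-fold iterate. $f_1^{(i)}$ denotes the $i$-th derivative of $f_1$. *)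

From Stdlib Require Import Reals Lra Lia Classical ClassicalEpsilon.
Open Scope R_scope.

(* Points of R^n are represented as x : nat -> R; only coordinates 0..n-1 are used. *)

Fixpoint sumR (m : nat) (F : nat -> R) : R :=
  match m with
  | O => 0
  | S p => sumR p F + F p
  end.

Definition norm2 (n : nat) (x : nat -> R) : R :=
  sqrt (sumR n (fun i => x i ^ 2)).

Definition upd (x : nat -> R) (i : nat) (t : R) : nat -> R :=
  fun j => if Nat.eqb j i then t else x j.

(* the derivative of h at t (chosen classically; meaningful where h is differentiable) *)
Definition der (h : R -> R) (t : R) : R :=
  epsilon (inhabits 0) (fun l => derivable_pt_lim h t l).

Definition pderiv (i : nat) (g : (nat -> R) -> R) (x : nat -> R) : R :=
  der (fun t => g (upd x i t)) (x i).

Definition lap (n : nat) (g : (nat -> R) -> R) (x : nat -> R) : R :=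
  sumR n (fun i => pderiv i (pderiv i g) x).

Fixpoint IminusLap (n k : nat) (g : (nat -> R) -> R) : (nat -> R) -> R :=
  match k with
  | O => g
  | S p => let h := IminusLap n p g in fun x => h x - lap n h x
  end.

(* D i is the i-th derivative of f on (0,oo), for i <= m, and D m is continuous
   there: i.e. f is m times continuously differentiable on (0,oo) with
   derivatives f^(i) = D i on (0,oo). *)
Definition CmDerivs (m : nat) (f : R -> R) (D : nat -> R -> R) : Prop :=
  (forall r, 0 < r -> D O r = f r) /\
  (forall i r, (i < m)%nat -> 0 < r -> derivable_pt_lim (D i) r (D (S i) r)) /\
  (forall r, 0 < r -> continuity_pt (D m) r).

From Stdlib Require Import Reals Lra Lia ClassicalEpsilon FunctionalExtensionality List.
Open Scope R_scope.

(* For radial g(x) = h(|x|) one has (I - Delta) g = (h - h'' - (n-1)/r h')(|x|) away from 0,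
   so (I - Delta)^k f is obtained by applying h |-> h - h'' - (n-1)/r h' k times to f_1.
   This operator preserves the span of the terms c n^j f_1^(i)(r) / r^j: the derivative of
   such a term is c n^j f_1^(i+1)/r^j - c (j/n) n^(j+1) f_1^(i)/r^(j+1), and (n-1)/r turns it
   into c ((n-1)/n) n^(j+1) f_1^(i)/r^(j+1).  After m steps every term has i + j <= 2m (and
   i >= 1 once j >= 1), so before each of the k steps j <= 2(k-1) <= n/2; with j/n <= 1/2 one
   step multiplies the l^1 norm of the coefficients by at most 5. *)

Lemma sumR_ext N F G : (forall i, (i < N)%nat -> F i = G i) -> sumR N F = sumR N G.
Proof.
  induction N as [|N IH]; intros H; simpl; [reflexivity|].
  rewrite IH, H; [reflexivity|lia|intros; apply H; lia].
Qed.

Lemma sumR_plus N F G : sumR N (fun i => F i + G i) = sumR N F + sumR N G.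
Proof. induction N as [|N IH]; simpl; [ring|]. rewrite IH; ring. Qed.

Lemma sumR_affine N F a b : sumR N (fun i => a * F i + b) = a * sumR N F + INR N * b.
Proof. induction N as [|N IH]; simpl; [ring|]. rewrite IH; destruct N; simpl; ring. Qed.

Lemma sumR_le N F G : (forall i, (i < N)%nat -> F i <= G i) -> sumR N F <= sumR N G.
Proof.
  induction N as [|N IH]; intros H; simpl; [lra|].
  pose proof (H N ltac:(lia)); pose proof (IH ltac:(intros; apply H; lia)); lra.
Qed.

Lemma sumR_nonneg N F : (forall i, 0 <= F i) -> 0 <= sumR N F.
Proof.
  intros H. replace 0 with (sumR N (fun _ => 0)).
  - apply sumR_le; auto.
  - induction N as [|N IH]; simpl; [|rewrite IH]; ring.
Qed.

Lemma sumR_eq0 N F : (forall i, (i < N)%nat -> F i = 0) -> sumR N F = 0.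
Proof.
  induction N as [|N IH]; intros H; simpl; [ring|].
  rewrite IH, H; [ring|lia|intros; apply H; lia].
Qed.

Lemma sumR_delta N i0 F : (i0 < N)%nat ->
  sumR N (fun i => if Nat.eqb i0 i then F i else 0) = F i0.
Proof.
  induction N as [|N IH]; intros Hi; simpl; [lia|].
  destruct (Nat.eqb_spec i0 N) as [<-|Hne].
  - rewrite sumR_eq0; [ring|]. intros i Hi'. destruct (Nat.eqb_spec i0 i); [lia|auto].
  - rewrite IH by lia. ring.
Qed.

Lemma Rabs_ratio a b : 0 <= a -> 0 < b -> Rabs (a / b) = a / b.
Proof. intros Ha Hb. apply Rabs_pos_eq, Rle_mult_inv_pos; auto. Qed.

Lemma Rdiv_le_of_le_mul a b c : 0 < b -> a <= c * b -> a / b <= c.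
Proof.
  intros Hb H. apply Rmult_le_reg_r with b; auto.
  unfold Rdiv. rewrite Rmult_assoc, Rinv_l, Rmult_1_r; lra.
Qed.

Lemma derivable_pt_lim_eq (f g : R -> R) x l l' :
  derivable_pt_lim f x l -> (forall t, f t = g t) -> l = l' -> derivable_pt_lim g x l'.
Proof.
  intros H E <-. replace g with f; auto. apply functional_extensionality; auto.
Qed.

Lemma der_locally_eq (F G : R -> R) x l d : 0 < d ->
  (forall t, Rabs (t - x) < d -> F t = G t) -> derivable_pt_lim G x l -> der F x = l.
Proof.
  intros Hd E HG.
  assert (HF : derivable_pt_lim F x l).
  { intros eps He. destruct (HG eps He) as [del Hdel].
    assert (Hm : 0 < Rmin del d) by (apply Rmin_pos; [apply cond_pos|auto]).
    exists (mkposreal _ Hm). intros h Hh0 Hh. simpl in Hh.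
    rewrite (E (x + h)), (E x).
    - apply Hdel; auto. eapply Rlt_le_trans; [apply Hh|apply Rmin_l].
    - rewrite Rminus_diag, Rabs_R0; auto.
    - replace (x + h - x) with h by ring. eapply Rlt_le_trans; [apply Hh|apply Rmin_r]. }
  apply (uniqueness_limite F x); auto.
  apply (epsilon_spec (inhabits 0) (fun l => derivable_pt_lim F x l)). eauto.
Qed.

Lemma sum_sq_pos_near A t0 : 0 <= A -> 0 < A + t0 ^ 2 ->
  exists d, 0 < d /\ forall t, Rabs (t - t0) < d -> 0 < A + t ^ 2.
Proof.
  intros HA H. destruct (Rlt_or_le 0 A) as [HA'|HA'].
  - exists 1. split; [lra|]. intros t _. pose proof (pow2_ge_0 t). lra.
  - assert (t0 <> 0) by (intros ->; simpl in H; lra).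
    exists (Rabs t0). split; [apply Rabs_pos_lt; auto|].
    intros t Ht. assert (t <> 0) by (intros ->; rewrite Rminus_0_l, Rabs_Ropp in Ht; lra).
    assert (0 < t ^ 2) by (simpl; rewrite Rmult_1_r; apply Rsqr_pos_lt; auto). lra.
Qed.

Section RadialCalculus.

Variable A : R.

Let rho t := sqrt (A + t ^ 2).

Lemma derivable_pt_lim_rho t : 0 < A + t ^ 2 -> derivable_pt_lim rho t (t / rho t).
Proof.
  intros H.
  assert (H1 : derivable_pt_lim (fun s => A + s ^ 2) t (2 * t)).
  { eapply derivable_pt_lim_eq.
    - apply derivable_pt_lim_plus;
        [apply (derivable_pt_lim_const A)|apply (derivable_pt_lim_pow t 2)].
    - reflexivity.
    - simpl; ring. }
  eapply derivable_pt_lim_eq.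
  - eapply (derivable_pt_lim_comp _ sqrt t _ _ H1), derivable_pt_lim_sqrt; auto.
  - reflexivity.
  - pose proof (sqrt_lt_R0 _ H). unfold rho. field. lra.
Qed.

Variables h h' h'' : R -> R.
Hypothesis Dh : forall r, 0 < r -> derivable_pt_lim h r (h' r).
Hypothesis Dh' : forall r, 0 < r -> derivable_pt_lim h' r (h'' r).

Lemma derivable_pt_lim_comp_rho t : 0 < A + t ^ 2 ->
  derivable_pt_lim (fun s => h (rho s)) t (h' (rho t) * (t / rho t)).
Proof.
  intros H. eapply (derivable_pt_lim_comp rho h t _ _ (derivable_pt_lim_rho t H)).
  apply Dh, sqrt_lt_R0; auto.
Qed.

Lemma derivable_pt_lim_radial_partial t : 0 < A + t ^ 2 ->
  derivable_pt_lim (fun s => h' (rho s) * (s / rho s)) t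
    (h'' (rho t) * (t / rho t) ^ 2 + h' (rho t) * (1 / rho t - t ^ 2 / rho t ^ 3)).
Proof.
  intros H. assert (Hr : 0 < rho t) by (apply sqrt_lt_R0; auto).
  eapply derivable_pt_lim_eq.
  - apply derivable_pt_lim_mult.
    + eapply (derivable_pt_lim_comp rho h' t _ _ (derivable_pt_lim_rho t H)).
      apply Dh', sqrt_lt_R0; auto.
    + apply derivable_pt_lim_div; [apply derivable_pt_lim_id|apply derivable_pt_lim_rho; auto|lra].
  - reflexivity.
  - unfold Rsqr, div_fct, comp, id. field. lra.
Qed.

End RadialCalculus.

Lemma upd_eq y i t : upd y i t i = t.
Proof. unfold upd. rewrite Nat.eqb_refl. reflexivity. Qed.

Lemma upd_id y i : upd y i (y i) = y.
Proof.
  apply functional_extensionality; intros l. unfold upd.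
  destruct (Nat.eqb_spec l i); subst; reflexivity.
Qed.

Definition sum_sq_off (n : nat) (y : nat -> R) (i : nat) : R :=
  sumR n (fun l => upd y i 0 l ^ 2).

Lemma sum_sq_off_ge0 n y i : 0 <= sum_sq_off n y i.
Proof. apply sumR_nonneg. intros; apply pow2_ge_0. Qed.

Lemma sum_sq_upd n y i t : (i < n)%nat ->
  sumR n (fun l => upd y i t l ^ 2) = sum_sq_off n y i + t ^ 2.
Proof.
  unfold sum_sq_off. induction n as [|n IH]; intros Hi; [lia|]. cbn [sumR].
  destruct (Nat.eq_dec i n) as [->|Hne].
  - rewrite !upd_eq, (sumR_ext n _ (fun l => upd y n 0 l ^ 2)); [ring|].
    intros l Hl. unfold upd. destruct (Nat.eqb_spec l n); [lia|reflexivity].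
  - rewrite IH by lia. unfold upd. destruct (Nat.eqb_spec n i); [lia|ring].
Qed.

Lemma norm2_upd n y i t : (i < n)%nat -> norm2 n (upd y i t) = sqrt (sum_sq_off n y i + t ^ 2).
Proof. intros Hi. unfold norm2. rewrite sum_sq_upd; auto. Qed.

Lemma norm2_split n y i : (i < n)%nat -> norm2 n y = sqrt (sum_sq_off n y i + y i ^ 2).
Proof. intros Hi. rewrite <- norm2_upd, upd_id; auto. Qed.

Lemma norm2_pos n y : norm2 n y <> 0 -> 0 < norm2 n y.
Proof. intros H. pose proof (sqrt_pos (sumR n (fun i => y i ^ 2))). unfold norm2 in *. lra. Qed.

Lemma norm2_sq n y : norm2 n y ^ 2 = sumR n (fun l => y l ^ 2).
Proof.
  unfold norm2. simpl. rewrite Rmult_1_r. apply sqrt_sqrt.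
  apply sumR_nonneg; intros; apply pow2_ge_0.
Qed.

Lemma sum_sq_off_pos n y i : (i < n)%nat -> norm2 n y <> 0 -> 0 < sum_sq_off n y i + y i ^ 2.
Proof.
  intros Hi Hy. destruct (Rle_or_lt (sum_sq_off n y i + y i ^ 2) 0) as [Hle|]; auto.
  exfalso. apply Hy. rewrite (norm2_split n y i) by auto. apply sqrt_neg_0; auto.
Qed.

Section RadialLaplacian.

Variable n : nat.
Variables (G : (nat -> R) -> R) (h h' h'' : R -> R).
Hypothesis G_radial : forall z, norm2 n z <> 0 -> G z = h (norm2 n z).
Hypothesis Dh : forall r, 0 < r -> derivable_pt_lim h r (h' r).
Hypothesis Dh' : forall r, 0 < r -> derivable_pt_lim h' r (h'' r).

Lemma pderiv_radial i z : (i < n)%nat -> norm2 n z <> 0 ->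
  pderiv i G z = h' (norm2 n z) * (z i / norm2 n z).
Proof.
  intros Hi Hz. pose proof (sum_sq_off_pos n z i Hi Hz) as Hpos.
  destruct (sum_sq_pos_near _ _ (sum_sq_off_ge0 n z i) Hpos) as [d [Hd Hnear]].
  unfold pderiv. rewrite (norm2_split n z i) by auto.
  apply (der_locally_eq _ (fun s => h (sqrt (sum_sq_off n z i + s ^ 2))) _ _ d Hd).
  - intros s Hs. rewrite G_radial; rewrite norm2_upd; auto.
    apply Rgt_not_eq, sqrt_lt_R0; auto.
  - apply derivable_pt_lim_comp_rho; auto.
Qed.

Theorem lap_radial y : norm2 n y <> 0 ->
  lap n G y = h'' (norm2 n y) + (INR n - 1) / norm2 n y * h' (norm2 n y).
Proof.
  intros Hy. set (r := norm2 n y).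
  assert (Hr : 0 < r) by (apply norm2_pos; auto).
  unfold lap.
  rewrite (sumR_ext n _ (fun i => (h'' r / r ^ 2 - h' r / r ^ 3) * y i ^ 2 + h' r / r)).
  { rewrite sumR_affine, <- norm2_sq. fold r. field. lra. }
  intros i Hi.
  pose proof (sum_sq_off_pos n y i Hi Hy) as Hpos.
  destruct (sum_sq_pos_near _ _ (sum_sq_off_ge0 n y i) Hpos) as [d [Hd Hnear]].
  assert (Hrho : sqrt (sum_sq_off n y i + y i ^ 2) = r) by (symmetry; apply norm2_split; auto).
  unfold pderiv at 1.
  set (rho s := sqrt (sum_sq_off n y i + s ^ 2)).
  erewrite (der_locally_eq _ (fun s => h' (rho s) * (s / rho s)) _ _ d Hd); cycle 1.
  - intros s Hs. rewrite pderiv_radial, norm2_upd, upd_eq; auto.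
    rewrite norm2_upd by auto. apply Rgt_not_eq, sqrt_lt_R0; auto.
  - apply derivable_pt_lim_radial_partial; auto.
  - rewrite Hrho. field. lra.
Qed.

End RadialLaplacian.

(* [Monomial c i j] stands for r |-> c n^j D_i(r) / r^j, where D_i is the i-th derivative of
   f_1; a list of monomials stands for their sum. *)
Record monomial := Monomial { coef : R; dord : nat; rpow : nat }.

Section PolynomialOperations.

Variable n : nat.

Definition deriv_mono (m : monomial) : list monomial :=
  Monomial (coef m) (S (dord m)) (rpow m) ::
  match rpow m with
  | O => nil
  | _ => Monomial (- (INR (rpow m) / INR n) * coef m) (dord m) (S (rpow m)) :: nil
  end.

Definition deriv_poly (p : list monomial) : list monomial := flat_map deriv_mono p.

Definition radial_poly (p : list monomial) : list monomial :=
  map (fun m => Monomial ((INR n - 1) / INR n * coef m) (dord m) (S (rpow m))) p.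

Definition opp_poly (p : list monomial) : list monomial :=
  map (fun m => Monomial (- coef m) (dord m) (rpow m)) p.

Definition lap_poly (p : list monomial) : list monomial :=
  deriv_poly (deriv_poly p) ++ radial_poly (deriv_poly p).

Definition step_poly (p : list monomial) : list monomial := p ++ opp_poly (lap_poly p).

Lemma deriv_poly_app p q : deriv_poly (p ++ q) = deriv_poly p ++ deriv_poly q.
Proof. apply flat_map_app. Qed.

Lemma radial_poly_app p q : radial_poly (p ++ q) = radial_poly p ++ radial_poly q.
Proof. apply map_app. Qed.

Definition supported (d : nat) (m : monomial) : Prop :=
  (dord m + rpow m <= d /\ (0 < rpow m -> 0 < dord m))%nat.

Lemma deriv_poly_supported d p : Forall (supported d) p ->
  Forall (fun m => supported (S d) m /\ (0 < dord m)%nat) (deriv_poly p).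
Proof.
  intros Hp. apply Forall_flat_map. eapply Forall_impl; [|exact Hp].
  intros [c i j] [Hdeg Hgood]; simpl in *.
  unfold deriv_mono, supported; simpl.
  destruct j as [|j]; repeat (apply Forall_cons || apply Forall_nil); cbn; lia.
Qed.

Lemma radial_poly_supported d p :
  Forall (fun m => supported d m /\ (0 < dord m)%nat) p -> Forall (supported (S d)) (radial_poly p).
Proof.
  intros Hp. apply Forall_map. eapply Forall_impl; [|exact Hp].
  intros [c i j] [[Hdeg _] Hi]; unfold supported; simpl in *. lia.
Qed.

Lemma opp_poly_supported d p : Forall (supported d) p -> Forall (supported d) (opp_poly p).
Proof. intros Hp. apply Forall_map. exact Hp. Qed.

Lemma step_poly_supported d p :
  Forall (supported d) p -> Forall (supported (S (S d))) (step_poly p).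
Proof.
  intros Hp. pose proof (deriv_poly_supported d p Hp) as Hd.
  assert (Hd' : Forall (supported (S d)) (deriv_poly p))
    by (eapply Forall_impl; [|exact Hd]; now intros m []).
  unfold step_poly, lap_poly. apply Forall_app; split.
  - eapply Forall_impl; [|exact Hp]. unfold supported; intros m; lia.
  - apply opp_poly_supported, Forall_app; split.
    + eapply Forall_impl; [|exact (deriv_poly_supported _ _ Hd')]. now intros m [].
    + eapply Forall_impl; [|exact (radial_poly_supported _ _ Hd)].
      unfold supported; intros m; lia.
Qed.

End PolynomialOperations.

Section Evaluation.

Variables (n : nat) (D : nat -> R -> R).
Hypothesis n_pos : (1 <= n)%nat.

Let n_neq0 : INR n <> 0.
Proof. apply not_0_INR. lia. Qed.

Definition eval_mono (m : monomial) (r : R) : R :=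
  coef m * INR n ^ rpow m * D (dord m) r / r ^ rpow m.

Definition eval_poly (p : list monomial) (r : R) : R :=
  fold_right (fun m acc => eval_mono m r + acc) 0 p.

Lemma eval_poly_app p q r : eval_poly (p ++ q) r = eval_poly p r + eval_poly q r.
Proof. induction p as [|m p IH]; simpl; [ring|]. rewrite IH; ring. Qed.

Lemma eval_opp_poly p r : eval_poly (opp_poly p) r = - eval_poly p r.
Proof.
  induction p as [|m p IH]; simpl; [ring|].
  rewrite IH. unfold eval_mono; simpl. unfold Rdiv; ring.
Qed.

Lemma eval_radial_poly p r : r <> 0 ->
  eval_poly (radial_poly n p) r = (INR n - 1) / r * eval_poly p r.
Proof.
  intros Hr. induction p as [|m p IH]; simpl; [ring|].
  rewrite IH. unfold eval_mono; simpl.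
  field. split; [apply pow_nonzero|]; auto.
Qed.

Lemma eval_step_poly p r : 0 < r ->
  eval_poly (step_poly n p) r =
  eval_poly p r - (eval_poly (deriv_poly n (deriv_poly n p)) r
                   + (INR n - 1) / r * eval_poly (deriv_poly n p) r).
Proof.
  intros Hr. unfold step_poly, lap_poly.
  rewrite eval_poly_app, eval_opp_poly, eval_poly_app, eval_radial_poly by lra. ring.
Qed.

Variable K : nat.
Hypothesis D_deriv : forall i r, (i < K)%nat -> 0 < r -> derivable_pt_lim (D i) r (D (S i) r).

Lemma derivable_pt_lim_eval_mono m r : (dord m < K)%nat -> 0 < r ->
  derivable_pt_lim (eval_mono m) r (eval_poly (deriv_mono n m) r).
Proof.
  intros Hm Hr. destruct m as [c i j]; simpl in Hm.
  assert (Hrj : r ^ j <> 0) by (apply pow_nonzero; lra).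
  eapply derivable_pt_lim_eq.
  - apply derivable_pt_lim_div; [|apply (derivable_pt_lim_pow r j)|auto].
    apply (derivable_pt_lim_scal (D i) (c * INR n ^ j)), D_deriv; auto.
  - reflexivity.
  - unfold deriv_mono, eval_poly, eval_mono, mult_real_fct, Rsqr; simpl.
    destruct j as [|j]; simpl.
    + field.
    + assert (r ^ j <> 0) by (apply pow_nonzero; lra). field. repeat split; auto; lra.
Qed.

Lemma derivable_pt_lim_eval_poly p r : Forall (fun m => dord m < K)%nat p -> 0 < r ->
  derivable_pt_lim (eval_poly p) r (eval_poly (deriv_poly n p) r).
Proof.
  intros Hp Hr. induction Hp as [|m p Hm Hp IH].
  - apply derivable_pt_lim_const.
  - change (deriv_poly n (m :: p)) with (deriv_mono n m ++ deriv_poly n p). rewrite eval_poly_app.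
    apply derivable_pt_lim_plus; [apply derivable_pt_lim_eval_mono|]; auto.
Qed.

End Evaluation.

Definition mass (p : list monomial) : R := fold_right (fun m acc => Rabs (coef m) + acc) 0 p.

Lemma mass_app p q : mass (p ++ q) = mass p + mass q.
Proof. induction p as [|m p IH]; simpl; [ring|]. rewrite IH; ring. Qed.

Lemma mass_opp_poly p : mass (opp_poly p) = mass p.
Proof. induction p as [|m p IH]; simpl; [reflexivity|]. rewrite IH, Rabs_Ropp. reflexivity. Qed.

Lemma mass_lap_poly_cons n m p :
  mass (lap_poly n (m :: p)) = mass (lap_poly n (m :: nil)) + mass (lap_poly n p).
Proof.
  change (m :: p) with ((m :: nil) ++ p). unfold lap_poly.
  rewrite !deriv_poly_app, !radial_poly_app, !mass_app. ring.
Qed.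

Lemma mass_lap_mono n m : (1 <= n)%nat -> (2 * rpow m <= n)%nat ->
  mass (lap_poly n (m :: nil)) <= 4 * Rabs (coef m).
Proof.
  intros Hn Hj. destruct m as [c i j]; simpl in Hj |- *.
  assert (HN : 1 <= INR n) by (apply (le_INR 1); auto).
  assert (Hz : Rabs ((INR n - 1) / INR n) = (INR n - 1) / INR n) by (apply Rabs_ratio; lra).
  assert (Hz1 : (INR n - 1) / INR n <= 1) by (apply Rdiv_le_of_le_mul; lra).
  pose proof (Rabs_pos c).
  destruct j as [|j].
  - cbn. rewrite Rabs_mult, Hz. nra.
  - cbn -[INR]. rewrite !Rabs_mult, !Rabs_Ropp, Hz, !Rabs_ratio by (auto using pos_INR; lra).
    rewrite (S_INR (S j)).
    assert (HJ : 1 <= INR (S j)) by (apply (le_INR 1); lia).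
    assert (HJN : 2 * INR (S j) <= INR n)
      by (replace 2 with (INR 2) by reflexivity; rewrite <- mult_INR; apply le_INR; lia).
    set (J := INR (S j)) in *. set (N := INR n) in *.
    assert (Hx : J / N <= 1 / 2) by (apply Rdiv_le_of_le_mul; lra).
    assert (Hy : (J + 1) / N <= 1) by (apply Rdiv_le_of_le_mul; lra).
    assert (0 <= J / N) by (apply Rle_mult_inv_pos; lra).
    assert (0 <= (J + 1) / N) by (apply Rle_mult_inv_pos; lra).
    assert (0 <= (N - 1) / N) by (apply Rle_mult_inv_pos; lra).
    set (x := J / N) in *; set (y := (J + 1) / N) in *; set (z := (N - 1) / N) in *.
    (* the six monomials of [lap_poly n (m :: nil)] have total mass |c| (1 + 2x + yx + z + zx) *)
    assert (1 + 2 * x + y * x + z + z * x <= 4) by nra.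
    nra.
Qed.

Lemma mass_step_poly n p : (1 <= n)%nat -> Forall (fun m => 2 * rpow m <= n)%nat p ->
  mass (step_poly n p) <= 5 * mass p.
Proof.
  intros Hn Hp. unfold step_poly. rewrite mass_app, mass_opp_poly.
  enough (mass (lap_poly n p) <= 4 * mass p) by lra.
  induction Hp as [|m p Hm Hp IH]; [cbn; lra|].
  rewrite mass_lap_poly_cons. pose proof (mass_lap_mono n m Hn Hm).
  change (mass (m :: p)) with (Rabs (coef m) + mass p). lra.
Qed.

Definition coef_at (p : list monomial) (i j : nat) : R :=
  fold_right (fun m acc =>
    (if andb (Nat.eqb (dord m) i) (Nat.eqb (rpow m) j) then coef m else 0) + acc) 0 p.

Definition box_sum (K : nat) (F : nat -> nat -> R) : R :=
  sumR (K + 1) (fun i => sumR K (fun j => if Nat.leb (i + j) K then F i j else 0)).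

Definition in_box (K : nat) (m : monomial) : Prop :=
  (dord m <= K /\ rpow m < K /\ dord m + rpow m <= K)%nat.

Lemma box_sum_plus K F G : box_sum K (fun i j => F i j + G i j) = box_sum K F + box_sum K G.
Proof.
  unfold box_sum. rewrite <- sumR_plus. apply sumR_ext; intros i _.
  rewrite <- sumR_plus. apply sumR_ext; intros j _. destruct (Nat.leb _ _); ring.
Qed.

Lemma box_sum_le K F G : (forall i j, F i j <= G i j) -> box_sum K F <= box_sum K G.
Proof.
  intros H. apply sumR_le; intros i _. apply sumR_le; intros j _.
  destruct (Nat.leb _ _); [apply H|lra].
Qed.

Lemma box_sum_delta K i0 j0 G : (i0 <= K /\ j0 < K /\ i0 + j0 <= K)%nat ->
  box_sum K (fun i j => if andb (Nat.eqb i0 i) (Nat.eqb j0 j) then G i j else 0) = G i0 j0.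
Proof.
  intros (Hi & Hj & Hij). unfold box_sum.
  rewrite (sumR_ext _ _ (fun i => if Nat.eqb i0 i then G i0 j0 else 0)).
  { apply (sumR_delta _ _ (fun _ => G i0 j0)). lia. }
  intros i _. destruct (Nat.eqb_spec i0 i) as [<-|Hne]; simpl.
  - rewrite (sumR_ext _ _ (fun j => if Nat.eqb j0 j then G i0 j else 0)).
    { apply (sumR_delta _ _ (G i0)). lia. }
    intros j _. destruct (Nat.eqb_spec j0 j) as [<-|]; [|destruct (Nat.leb _ _)]; auto.
    replace (Nat.leb (i0 + j0) K) with true by (symmetry; apply Nat.leb_le; auto). reflexivity.
  - apply sumR_eq0. intros j _. destruct (Nat.leb _ _); reflexivity.
Qed.

Lemma box_sum_eval n D K p r : Forall (in_box K) p ->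
  box_sum K (fun i j => coef_at p i j * INR n ^ j * D i r / r ^ j) = eval_poly n D p r.
Proof.
  intros Hp. induction Hp as [|[c i0 j0] p Hm Hp IH].
  - apply sumR_eq0; intros i _. apply sumR_eq0; intros j _.
    destruct (Nat.leb _ _); simpl; [unfold Rdiv; ring|reflexivity].
  - simpl. rewrite <- IH.
    transitivity (box_sum K (fun i j =>
      (if andb (Nat.eqb i0 i) (Nat.eqb j0 j) then c * INR n ^ j * D i r / r ^ j else 0)
      + coef_at p i j * INR n ^ j * D i r / r ^ j)).
    { f_equal. do 2 (apply functional_extensionality; intro).
      destruct (andb _ _); unfold Rdiv; ring. }
    rewrite box_sum_plus, box_sum_delta by exact Hm. reflexivity.
Qed.

Lemma box_sum_abs_coef_at K p : Forall (in_box K) p ->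
  box_sum K (fun i j => Rabs (coef_at p i j)) <= mass p.
Proof.
  intros Hp. induction Hp as [|[c i0 j0] p Hm Hp IH].
  - apply Req_le, sumR_eq0; intros i _. apply sumR_eq0; intros j _.
    destruct (Nat.leb _ _); [apply Rabs_R0|reflexivity].
  - eapply Rle_trans.
    + apply (box_sum_le K _ (fun i j =>
        (if andb (Nat.eqb i0 i) (Nat.eqb j0 j) then Rabs c else 0) + Rabs (coef_at p i j))).
      intros i j. simpl. destruct (andb _ _).
      * apply Rabs_triang.
      * rewrite Rplus_0_l. lra.
    + rewrite box_sum_plus, box_sum_delta by exact Hm.
      change (mass (Monomial c i0 j0 :: p)) with (Rabs c + mass p). lra.
Qed.

Definition IminusLap_poly (n k : nat) : list monomial :=
  Nat.iter k (step_poly n) (Monomial 1 0 0 :: nil).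

Lemma IminusLap_poly_supported n k : Forall (supported (2 * k)) (IminusLap_poly n k).
Proof.
  induction k as [|k IH].
  - apply Forall_cons; [unfold supported; cbn; lia|apply Forall_nil].
  - replace (2 * S k)%nat with (S (S (2 * k))) by lia.
    apply step_poly_supported, IH.
Qed.

Lemma mass_IminusLap_poly n k : (1 <= n)%nat -> (4 * k <= n + 4)%nat ->
  mass (IminusLap_poly n k) <= 5 ^ k.
Proof.
  intros Hn. induction k as [|k IH]; intros Hk.
  - cbn. rewrite Rabs_R1. lra.
  - change (IminusLap_poly n (S k)) with (step_poly n (IminusLap_poly n k)).
    simpl (5 ^ S k). eapply Rle_trans.
    + apply mass_step_poly; auto.
      eapply Forall_impl; [|apply IminusLap_poly_supported].
      intros m [Hdeg _]. lia.
    + assert (Hk' : (4 * k <= n + 4)%nat) by lia.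
      pose proof (IH Hk'). lra.
Qed.

Section RadialIteration.

Variables (n K : nat) (D : nat -> R -> R) (g : (nat -> R) -> R).
Hypothesis n_pos : (1 <= n)%nat.
Hypothesis D_deriv : forall i r, (i < K)%nat -> 0 < r -> derivable_pt_lim (D i) r (D (S i) r).
Hypothesis g_radial : forall z, norm2 n z <> 0 -> g z = D 0%nat (norm2 n z).

Lemma derivable_pt_lim_eval_supported d p r : (d < K)%nat -> Forall (supported d) p -> 0 < r ->
  derivable_pt_lim (eval_poly n D p) r (eval_poly n D (deriv_poly n p) r).
Proof.
  intros HdK Hp. apply (derivable_pt_lim_eval_poly n D n_pos K D_deriv).
  eapply Forall_impl; [|exact Hp]. intros m [Hdeg _]. lia.
Qed.

Theorem IminusLap_eval_poly k y : (2 * k <= K)%nat -> norm2 n y <> 0 ->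
  IminusLap n k g y = eval_poly n D (IminusLap_poly n k) (norm2 n y).
Proof.
  revert y. induction k as [|k IH]; intros y Hk Hy.
  - cbn. rewrite g_radial by auto. unfold eval_mono; simpl. field.
  - pose proof (IminusLap_poly_supported n k) as Hp.
    cbn [IminusLap]. change (IminusLap_poly n (S k)) with (step_poly n (IminusLap_poly n k)).
    rewrite (lap_radial n _ (eval_poly n D (IminusLap_poly n k))
               (eval_poly n D (deriv_poly n (IminusLap_poly n k)))
               (eval_poly n D (deriv_poly n (deriv_poly n (IminusLap_poly n k))))).
    + rewrite eval_step_poly, IH by (auto using norm2_pos; lia). reflexivity.
    + intros z Hz. apply IH; auto. lia.
    + intros r Hr. apply (derivable_pt_lim_eval_supported (2 * k)); auto. lia.
    + intros r Hr. apply (derivable_pt_lim_eval_supported (S (2 * k))); auto; [lia|].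
      eapply Forall_impl; [|exact (deriv_poly_supported n _ _ Hp)]. now intros m [].
    + exact Hy.
Qed.

End RadialIteration.

Theorem lemmaF3 (n k : nat) :
  (1 <= n)%nat -> (1 <= k)%nat -> INR k <= INR n / 4 + 1 ->
  exists c : nat -> nat -> R,
    sumR (2 * k + 1) (fun i => sumR (2 * k) (fun j =>
      if Nat.leb (i + j) (2 * k) then Rabs (c i j) else 0)) <= 5 ^ k /\
    forall (f1 : R -> R) (D : nat -> R -> R),
      CmDerivs (2 * k) f1 D ->
      forall x : nat -> R, norm2 n x <> 0 ->
        IminusLap n k (fun y => f1 (norm2 n y)) x =
        sumR (2 * k + 1) (fun i => sumR (2 * k) (fun j =>
          if Nat.leb (i + j) (2 * k)
          then c i j * INR n ^ j * D i (norm2 n x) / norm2 n x ^ j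
          else 0)).
Proof.
  intros Hn Hk Hkn.
  assert (Hk4 : (4 * k <= n + 4)%nat).
  { apply INR_le. rewrite mult_INR, plus_INR. simpl (INR 4). lra. }
  set (p := IminusLap_poly n k).
  assert (Hbox : Forall (in_box (2 * k)) p).
  { eapply Forall_impl; [|apply IminusLap_poly_supported].
    intros m [Hdeg Hgood]. unfold in_box. lia. }
  exists (coef_at p). split.
  - eapply Rle_trans; [apply (box_sum_abs_coef_at _ _ Hbox)|].
    apply mass_IminusLap_poly; auto.
  - intros f1 D (HD0 & HD & _) x Hx.
    assert (Hradial : forall z, norm2 n z <> 0 -> f1 (norm2 n z) = D 0%nat (norm2 n z))
      by (intros z Hz; symmetry; apply HD0, norm2_pos, Hz).
    rewrite (IminusLap_eval_poly n (2 * k) D _ Hn HD Hradial k x (le_n _) Hx).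
    symmetry. apply box_sum_eval, Hbox.
Qed.
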